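(* Let $\Omega=\{1,\dots,m\}^{\mathbb{N}}$ with shift $\sigma$, let $\mathcal{M}$ be the set of Borel probabilities on $\Omega$ with the Monge–Kantorovich metric $d_{MK}$, and let $\mathfrak{T}:\mathcal{M}\to\mathcal{M}$ be the push-forward map $\mathfrak{T}(\mu)(E)=\mu(\sigma^{-1}(E))$. Then there exists $\mu\in\mathcal{M}$ whose forward orbit $\{\mathfrak{T}^n(\mu):n\ge 0\}$ is dense in $\mathcal{M}$.
   Context: $\Omega$ carries the metric $d_\Omega(\alpha,\beta)=2^{-k}$ with $k=\min\{i:\alpha_i\neq\beta_i\}$ (and $0$ if $\alpha=\beta$); $d_{MK}(\mu,\nu)=\sup\{\int f\,d\mu-\int f\,d\nu : f \text{ 1-Lipschitz}\}$. $\sigma(x_1,x_2,\dots)=(x_2,x_3,\dots)$. *)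

From HB Require Import structures.
From mathcomp Require Import all_boot all_order all_algebra.
From mathcomp Require Import all_classical all_reals all_analysis.
Set Implicit Arguments. Unset Strict Implicit. Unset Printing Implicit Defensive.
Import Order.TTheory GRing.Theory Num.Theory.
Local Open Scope classical_set_scope.
Local Open Scope ring_scope.

(* The alphabet {1,...,m} is represented by 'I_m with m = n.+1 (so m >= 1). *)
Definition sym (n : nat) := 'I_n.+1.
HB.instance Definition _ n := Choice.on (sym n).
HB.instance Definition _ n := isPointed.Build (sym n) ord0.

Definition OmegaT (n : nat) := nat -> sym n.
HB.instance Definition _ n := Pointed.on (OmegaT n).

Section Defs.
Variables (R : realType) (n : nat).

Definition dOmega (a b : OmegaT n) : R :=
  match pselect (exists i, a i != b i) with
  | left h => (2 ^-1) ^+ (ex_minn h)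
  | right _ => 0
  end.

Definition dOmega_open (A : set (OmegaT n)) : Prop :=
  forall x, A x -> exists2 e : R, 0 < e & forall y, dOmega x y < e -> A y.

Definition Omega := g_sigma_algebraType dOmega_open.
HB.instance Definition _ := Measurable.on Omega.

Definition shift (x : Omega) : Omega := fun i => x i.+1.

Definition one_Lipschitz (f : Omega -> R) : Prop :=
  forall x y, `|f x - f y| <= dOmega x y.

Definition dMK (mu nu : set Omega -> \bar R) : R :=
  sup [set r : R | exists2 f : Omega -> R, one_Lipschitz f &
     r = fine (\int[mu]_x (f x)%:E) - fine (\int[nu]_x (f x)%:E)].

Definition Tpush (mu : set Omega -> \bar R) : set Omega -> \bar R :=
  pushforward mu shift.

End Defs.

From Pilot Require Import Defs.
From HB Require Import structures.
From mathcomp Require Import all_boot all_order all_algebra.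
From mathcomp Require Import all_classical all_reals all_analysis.
From mathcomp Require Import ring lra.
Import Order.TTheory GRing.Theory Num.Theory Num.Def.
Local Open Scope classical_set_scope.
Local Open Scope ring_scope.
Set Implicit Arguments. Unset Strict Implicit.

(* Draw t uniformly in [0, 1] and build a sequence x(t) block by block: the
   block on the positions [2^c, 2^(c+1)) is the word number floor(t N) of the
   N-element list of words coded by c, and every finite list of words is coded
   by infinitely many c.  Shifting x(t) by 2^c brings such a block to the
   front, so for L <= 2^c the L-marginal of T^(2^c) mu, where mu is the law of
   x(t), is exactly the empirical distribution of the list.  Every L-marginal
   of a probability nu is l^1-close to some empirical distribution, and
   d_MK(P, Q) <= 2^(1-L) + sum_w |P[w] - Q[w]| over the words w of length L,
   because resetting the coordinates past L moves a 1-Lipschitz function by at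
   most 2^-L.  Taking L large shows that the orbit of mu is dense. *)

Lemma exists_halfpow_lt (R : archiRealFieldType) (e : R) :
  0 < e -> exists L, 2^-1 ^+ L < e.
Proof.
move=> e0; exists (truncn e^-1); set L := truncn _.
have lt_inve_pow : e^-1 < (2 ^ L)%:R.
  by apply: lt_le_trans (truncnS_gt _) _; rewrite ler_nat ltn_expl.
rewrite exprVn -natrX -[X in _ < X]invrK.
by rewrite ltf_pV2 ?posrE ?invr_gt0 // ltr0n expn_gt0.
Qed.

Lemma count_flatten_nseq (W : finType) (c : W -> nat) v :
  count_mem v (flatten [seq nseq (c w) w | w <- enum W]) = c v.
Proof.
rewrite count_flatten -map_comp sumnE big_map big_enum /=.
rewrite (bigD1 v) //= count_nseq /= eqxx mul1n big1 ?addn0 // => w /negbTE wv.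
by rewrite count_nseq /= wv.
Qed.

(* Round [p w * N] down and pad the list with copies of a single point. *)
Lemma empirical_approx (R : archiRealFieldType) (W : finType) (p : W -> R) :
  (forall w, 0 <= p w) -> \sum_w p w = 1 -> forall δ : R, 0 < δ ->
  exists2 D : seq W, (0 < size D)%N &
    \sum_w `|p w - (count_mem w D)%:R / (size D)%:R| <= δ.
Proof.
move=> p0 p1 δ δ0.
have [w0 _] : exists w0 : W, True.
  case: (pickP (@predT W)) => [w0 _|W0]; first by exists w0.
  by move: p1; rewrite big_pred0 // => /esym/eqP; rewrite oner_eq0.
set K := #|W|; pose N := (truncn (2 * K%:R / δ)).+1.
have N_gt0 : 0 < N%:R :> R by rewrite ltr0n.
pose c w := truncn (p w * N%:R).
have c_le w : (c w)%:R <= p w * N%:R by rewrite truncn_le mulr_ge0 // ler0n.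
have c_gt w : p w * N%:R < (c w)%:R + 1 by rewrite natr1; exact: truncnS_gt.
pose S := (\sum_w c w)%N.
have SR : S%:R = \sum_w (c w)%:R :> R by rewrite natr_sum.
have SN : (S <= N)%N.
  rewrite -(ler_nat R) SR; apply: le_trans (ler_sum _ (fun w _ => c_le w)) _.
  by rewrite -mulr_suml p1 mul1r.
pose r := (N - S)%N.
have rK : r%:R <= K%:R :> R.
  have : \sum_w (p w * N%:R) <= \sum_w ((c w)%:R + 1) :> R.
    by apply: ler_sum => w _; exact: ltW.
  rewrite -mulr_suml p1 mul1r big_split /= sumr_const -/K -SR natrB // => h.
  by rewrite lerBlDr addrC.
pose D := flatten [seq nseq (c w) w | w <- enum W] ++ nseq r w0.
have sizeD : size D = N.
  rewrite size_cat size_nseq size_flatten /shape -map_comp sumnE big_map big_enum.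
  by rewrite (eq_bigr c) => [|w _]; rewrite ?subnKC //= size_nseq.
exists D; first by rewrite sizeD.
rewrite sizeD.
have err v : `|p v - (count_mem v D)%:R / N%:R| <=
             N%:R^-1 + (w0 == v)%:R * (r%:R / N%:R).
  rewrite count_cat count_flatten_nseq count_nseq natrD natrM mulrDl.
  have rounding : `|p v - (c v)%:R / N%:R| <= N%:R^-1.
    have -> : p v - (c v)%:R / N%:R = (p v * N%:R - (c v)%:R) / N%:R.
      by field; rewrite gt_eqF.
    rewrite normrM normfV (gtr0_norm N_gt0) -[X in _ <= X]mul1r.
    rewrite ler_pM2r ?invr_gt0 // ler_norml; have := c_le v; have := c_gt v; lra.
  rewrite opprD addrA; apply: le_trans (ler_normB _ _) _; apply: lerD => //.
  by rewrite ger0_norm ?mulrA // divr_ge0 // mulr_ge0.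
apply: le_trans (ler_sum _ (fun v _ => err v)) _.
rewrite big_split /= sumr_const -/K -mulr_suml.
rewrite (bigD1 w0) //= eqxx big1 ?addr0 ?mul1r; last first.
  by move=> v /negbTE; rewrite eq_sym => ->.
have : 2 * K%:R < δ * N%:R by rewrite -ltr_pdivrMl // mulrC truncnS_gt.
rewrite -(mulr_natl (N%:R^-1) K) -mulrDl ler_pdivrMr //; lra.
Qed.

Lemma norm_sum_mulB_le (R : numDomainType) (W : finType) (a p q : W -> R) a0 :
  (forall w, `|a w - a0| <= 1) -> \sum_w p w = \sum_w q w ->
  `|\sum_w a w * p w - \sum_w a w * q w| <= \sum_w `|p w - q w|.
Proof.
move=> a_osc pq.
have -> : \sum_w a w * p w - \sum_w a w * q w =
    \sum_w (a w - a0) * (p w - q w) + a0 * (\sum_w p w - \sum_w q w).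
  rewrite -!sumrB mulr_sumr -big_split /=; apply: eq_bigr => w _; ring.
rewrite pq subrr mulr0 addr0; apply: le_trans (ler_norm_sum _ _ _) _.
by apply: ler_sum => w _; rewrite normrM ler_piMl.
Qed.

Section Metric.
Variables (R : realType) (n : nat).
Local Notation Om := (Omega R n).
Local Notation dO := (@dOmega R n).

Let half_ge0 : 0 <= (2^-1 : R). Proof. by rewrite invr_ge0. Qed.
Let half_le1 : (2^-1 : R) <= 1. Proof. by rewrite invf_le1 // ler1n. Qed.

Lemma dOmega_ge0 (x y : Om) : 0 <= dO x y.
Proof. by rewrite /dOmega; case: pselect => // h; rewrite exprn_ge0. Qed.

Lemma dOmega_le1 (x y : Om) : dO x y <= 1.
Proof. by rewrite /dOmega; case: pselect => // h; rewrite exprn_ile1. Qed.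

Lemma dOmega_le_agree L (x y : Om) :
  (forall i, (i < L)%N -> x i = y i) -> dO x y <= 2^-1 ^+ L.
Proof.
move=> xy; rewrite /dOmega; case: pselect => [h|_]; last by rewrite exprn_ge0.
case: ex_minnP => k /eqP xyk _; apply: ler_wiXn2l; rewrite ?half_ge0 //.
by rewrite leqNgt; apply: contra_notN xyk => /xy.
Qed.

Lemma agree_dOmega_lt L (x y : Om) :
  dO x y < 2^-1 ^+ L -> forall i, (i <= L)%N -> x i = y i.
Proof.
move=> dxy i iL; apply/eqP/negP => /negP xyi; move: dxy.
rewrite /dOmega; case: pselect => [h|[]]; last by exists i.
case: ex_minnP => k _ kmin; rewrite ltNge ler_wiXn2l ?half_ge0 //.
exact: leq_trans (kmin _ xyi) iL.
Qed.

Lemma dOmega_le_of_agree (x y a b : Om) :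
  (forall k, (forall i, (i < k)%N -> x i = y i) ->
             forall i, (i < k)%N -> a i = b i) ->
  dO a b <= dO x y.
Proof.
move=> agree; rewrite {2}/dOmega; case: pselect => [h|xy].
  case: ex_minnP => k _ kmin; apply/dOmega_le_agree/agree => i ik.
  by apply/eqP/negP => /negP/kmin; rewrite leqNgt ik.
rewrite /dOmega; case: pselect => // -[i abi]; exfalso; move: abi.
rewrite (agree i.+1) ?eqxx // => j _.
by apply/eqP/negP => /negP xyj; apply: xy; exists j.
Qed.

End Metric.

Section Cylinders.
Variables (R : realType) (n : nat).
Local Notation Om := (Omega R n).

Definition cyl (s : seq (sym n)) : set Om :=
  [set x | forall i, (i < size s)%N -> x i = nth ord0 s i].

Lemma cyl_open s : dOmega_open R (cyl s).
Proof.
move=> x xs; exists (2^-1 ^+ size s); first by rewrite exprn_gt0 // invr_gt0.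
by move=> y dxy i iL; rewrite -xs // (agree_dOmega_lt dxy) // ltnW.
Qed.

Lemma measurable_cyl s : measurable (cyl s).
Proof. by apply: sub_sigma_algebra; exact: cyl_open. Qed.

Lemma cyl_take (x : Om) L : cyl [seq x i | i <- iota 0 L] x.
Proof.
move=> i; rewrite size_map size_iota => iL.
by rewrite (nth_map 0%N) ?size_iota // nth_iota.
Qed.

Lemma dOmega_cyl_take L (x y : Om) :
  cyl [seq x i | i <- iota 0 L] y -> dOmega R x y <= 2^-1 ^+ L.
Proof.
move=> xy; apply: dOmega_le_agree => i iL; have := xy i.
by rewrite size_map size_iota (nth_map 0%N) ?size_iota // nth_iota // => ->.
Qed.

Lemma open_bigcup_cyl (A : set Om) : dOmega_open R A ->
  A = \bigcup_(s in [set s | cyl s `<=` A]) cyl s.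
Proof.
move=> oA; apply/seteqP; split => [x Ax|x [s sA /sA] //].
have [e e0 ball_e] := oA x Ax; have [L eL] := exists_halfpow_lt e0.
exists [seq x i | i <- iota 0 L]; last exact: cyl_take.
by move=> y xy; apply/ball_e/(le_lt_trans (dOmega_cyl_take xy) eL).
Qed.

Lemma measurable_fun_Omega d (T : measurableType d) (Psi : T -> Om) :
  (forall i a, measurable [set t | Psi t i = a]) -> measurable_fun setT Psi.
Proof.
move=> mPsi; apply: (@measurability _ _ _ _ setT Psi (@dOmega_open R n)) => //.
move=> _ [A oA <-]; rewrite setTI (open_bigcup_cyl oA) preimage_bigcup.
rewrite bigcup_mkcond; apply: countable_bigcupT_measurable => [|s].
  exact: countableP.
case: ifPn => // _.
have -> : Psi @^-1` cyl s =
    \bigcap_(i in [set i | (i < size s)%N]) [set t | Psi t i = nth ord0 s i].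
  by apply/seteqP; split => t Psit i; apply: Psit.
by apply: bigcap_measurableType => i _; exact: mPsi.
Qed.

Lemma lipschitz_measurable (f : Om -> R) :
  one_Lipschitz f -> measurable_fun setT f.
Proof.
move=> lf; apply: (measurability _ (measurable_realfun.RGenInftyO.measurableE R)).
move=> _ [_ [r ->] <-]; apply: sub_sigma_algebra => x [_ /=].
rewrite in_itv /= => fxr; exists (r - f x); first by rewrite subr_gt0.
move=> y dxy; split => //=; rewrite in_itv /=.
by have := lf x y; rewrite ler_norml => /andP[? _]; lra.
Qed.

End Cylinders.

Section Truncation.
Variables (R : realType) (n : nat).
Local Notation Om := (Omega R n).
Local Notation dO := (@dOmega R n).

Definition wordof L (x : Om) : L.-tuple (sym n) := [tuple x i | i < L].

Definition padw L (w : L.-tuple (sym n)) : Om := fun i => nth ord0 w i.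

Definition truncate L (x : Om) : Om := padw (wordof L x).

Lemma nth_wordof L (x : Om) i : (i < L)%N -> nth ord0 (wordof L x) i = x i.
Proof.
by move=> iL; rewrite -[i]/(nat_of_ord (Ordinal iL)) -tnth_nth tnth_mktuple.
Qed.

Lemma cyl_wordofP L (x : Om) (w : L.-tuple (sym n)) : cyl w x <-> wordof L x = w.
Proof.
split => [xw|<- i]; last by rewrite size_tuple => iL; rewrite nth_wordof.
apply: eq_from_tnth => i; rewrite tnth_mktuple (tnth_nth ord0).
by apply: xw; rewrite size_tuple.
Qed.

Lemma dOmega_truncate L (x : Om) : dO x (truncate L x) <= 2^-1 ^+ L.
Proof. by apply: dOmega_le_agree => i iL; rewrite /truncate /padw nth_wordof. Qed.

Lemma lipschitz_truncate L (f : Om -> R) :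
  one_Lipschitz f -> one_Lipschitz (f \o truncate L).
Proof.
move=> lf x y; apply: le_trans (lf _ _) _; apply: dOmega_le_of_agree => k xy i ik.
rewrite /truncate /padw; have [iL|Li] := ltnP i L.
  by rewrite !nth_wordof ?xy.
by rewrite !nth_default // size_tuple.
Qed.

Lemma lipschitz_bounded (f : Om -> R) x0 :
  one_Lipschitz f -> forall x, `|f x| <= `|f x0| + 1.
Proof.
move=> lf x; rewrite -[f x](subrK (f x0)) addrC.
apply: le_trans (ler_normD _ _) _; rewrite lerD2l.
exact: le_trans (lf x x0) (dOmega_le1 x x0).
Qed.

Variable P : probability Om R.

Lemma lipschitz_integrable (f : Om -> R) :
  one_Lipschitz f -> P.-integrable setT (EFin \o f).
Proof.
move=> lf; apply: measurable_bounded_integrable => //.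
- by apply: le_lt_trans (probability_le1 P measurableT) _; rewrite ltry.
- exact: lipschitz_measurable.
exists (`|f point| + 1); split; first by rewrite num_real.
by move=> M hM x _ /=; apply: le_trans (lipschitz_bounded point lf x) (ltW hM).
Qed.

Lemma integral_wordof L (h : L.-tuple (sym n) -> R) :
  \int[P]_x h (wordof L x) = \sum_(w : L.-tuple (sym n)) h w * fine (P (cyl w)).
Proof.
have hE x : h (wordof L x) = \sum_(w : L.-tuple (sym n)) h w * \1_(cyl w) x.
  have xwx : cyl (wordof L x) x by apply/cyl_wordofP.
  rewrite (bigD1 (wordof L x)) //= indicE (mem_set xwx).
  rewrite mulr1 big1 ?addr0 // => w /negbTE wxw.
  by rewrite indicE memNset ?mulr0 // => /cyl_wordofP xw; rewrite xw eqxx in wxw.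
have icyl w : P.-integrable setT (EFin \o \1_(cyl w)).
  by apply: integrable_indic => //; exact: measurable_cyl.
rewrite /Rintegral; under eq_integral do rewrite hE -sumEFin.
rewrite integral_sum //; last first.
  move=> w; under eq_fun do rewrite EFinM.
  by apply: integrableZl => //; exact: icyl.
rewrite -[RHS]/(fine (\sum_w h w * fine (P (cyl w)))%:E) -sumEFin.
congr fine; apply: eq_bigr => w _.
under eq_integral do rewrite EFinM.
rewrite integralZl //; last exact: icyl.
rewrite integral_indic ?setIT //; last exact: measurable_cyl.
by rewrite EFinM fineK // fin_num_measure //; exact: measurable_cyl.
Qed.

Lemma sum_prob_cyl L : \sum_(w : L.-tuple (sym n)) fine (P (cyl w)) = 1.
Proof.
have := @integral_wordof L (fun _ => 1).
rewrite Rintegral_cst // [X in fine X]probability_setT mul1r /= => ->.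
by apply: eq_bigr => w _; rewrite mul1r.
Qed.

Lemma integral_truncate_dist L (f : Om -> R) : one_Lipschitz f ->
  `|\int[P]_x f x - \int[P]_x f (truncate L x)| <= 2^-1 ^+ L.
Proof.
move=> lf; have if_ := lipschitz_integrable lf.
have ift := lipschitz_integrable (lipschitz_truncate L lf).
have idiff : P.-integrable setT (EFin \o (fun x => f x - f (truncate L x))).
  have -> : EFin \o (fun x => f x - f (truncate L x)) =
            ((EFin \o f) \- (EFin \o (f \o truncate L)))%E.
    by apply/funext => x /=; rewrite EFinB.
  exact: integrableB.
rewrite -RintegralB //; apply: le_trans (le_normr_Rintegral _ idiff) _ => //.
apply: le_trans (@le_Rintegral _ _ _ P setT _ (cst (2^-1 ^+ L)) _ _ _ _) _ => //.
- exact: integrable_norm.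
- exact: finite_measure_integrable_cst.
- by move=> x _; exact: le_trans (lf x (truncate L x)) (dOmega_truncate L x).
by rewrite Rintegral_cst // [X in fine X]probability_setT mulr1.
Qed.

End Truncation.

Lemma dMK_le_cyl (R : realType) (n : nat) (P Q : probability (Omega R n) R) L :
  dMK P Q <= 2 * 2^-1 ^+ L +
    \sum_(w : L.-tuple (sym n)) `|fine (P (cyl w)) - fine (Q (cyl w))|.
Proof.
apply: ge_sup.
  exists (fine (\int[P]_x (cst 0 x)%:E) - fine (\int[Q]_x (cst 0 x)%:E)).
  by exists (cst 0) => // x y; rewrite subrr normr0 dOmega_ge0.
move=> _ [f lf ->]; set S := \sum_(w : L.-tuple (sym n)) _.
change (\int[P]_x f x - \int[Q]_x f x <= 2 * 2^-1 ^+ L + S).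
have := integral_truncate_dist P L lf; have := integral_truncate_dist Q L lf.
have : `|\int[P]_x f (truncate L x) - \int[Q]_x f (truncate L x)| <= S.
  rewrite !(integral_wordof _ (fun w => f (padw R w))).
  apply: (norm_sum_mulB_le (a0 := f point)); last by rewrite !sum_prob_cyl.
  by move=> w; apply: le_trans (lf _ _) (dOmega_le1 _ _).
rewrite !ler_norml => /andP[? ?] /andP[? ?] /andP[? ?].
have : 0 <= S by apply: sumr_ge0.
lra.
Qed.

Section UniformIndex.
Variable R : realType.
Local Notation RT := (measurableTypeR R).

Definition unif01 : probability RT R := uniform_prob (@ltr01 R).

Definition bucket (N : nat) (t : R) : nat := truncn (t * N%:R).

Lemma measurable_truncn_eq d : measurable [set y : R | truncn y = d].
Proof.
case: d => [|d].
  have -> : [set y : R | truncn y = 0%N] = `]-oo, 1[%classic.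
    apply/seteqP; split => y /=; rewrite in_itv /= -[1]/(1%:R) -truncn_le_nat.
      by move=> ->.
    by rewrite leqn0 => /eqP.
  exact: measurable_itv.
have -> : [set y : R | truncn y = d.+1] =
    `]-oo, d.+2%:R[%classic `&` `[d.+1%:R, +oo[%classic.
  apply/seteqP; split => y /=; rewrite !in_itv /= ?andbT.
    by move=> yd; rewrite -truncn_le_nat -truncn_gt_nat yd leqnn.
  case=> ? ?; apply/eqP.
  by rewrite eqn_leq truncn_le_nat truncn_gt_nat; apply/andP.
exact: measurableI.
Qed.

Lemma measurable_bucket N (Q : set nat) :
  measurable [set t : RT | Q (bucket N t)].
Proof.
have -> : [set t : RT | Q (bucket N t)] =
    \bigcup_(d in Q) (fun t => t * N%:R) @^-1` [set y | truncn y = d].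
  apply/seteqP; split => [t Qt|t [d Qd /= tN]]; first by exists (bucket N t).
  by rewrite /bucket tN.
apply: bigcup_measurable => d _.
have := measurable_realfun.mulrr_measurable N%:R measurableT
  (measurable_truncn_eq d).
by rewrite setTI.
Qed.

Lemma unif01E (U : set RT) : measurable U ->
  unif01 U = lebesgue_measure (U `&` `[0, 1]%classic).
Proof.
move=> mU; change (\int[lebesgue_measure]_(x in U) (uniform_pdf 0 1 x)%:E =
  lebesgue_measure (U `&` `[0%R, 1%R]%classic))%E.
rewrite integral_uniform_pdf.
rewrite (eq_integral (fun _ => 1%:E)) ?integral_cst ?mul1e //.
  exact: measurableI.
move=> x; rewrite inE => -[_ /=]; rewrite in_itv /= /uniform_pdf => ->.
by rewrite subr0 invr1.
Qed.

Lemma unif01_bucket_eq N d : (d < N)%N ->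
  unif01 [set t | bucket N t = d] = (N%:R^-1)%:E.
Proof.
move=> dN; have N_gt0 : 0 < N%:R :> R by rewrite ltr0n (leq_ltn_trans _ dN).
rewrite unif01E; last exact: (measurable_bucket N (eq^~ d)).
have -> : [set t : RT | bucket N t = d] `&` `[0, 1]%classic =
    `[(d%:R / N%:R), (d.+1%:R / N%:R)[%classic.
  apply/seteqP; split => t /=; rewrite !in_itv /=.
    move=> [td /andP[t0 t1]].
    have /truncn_itv : 0 <= t * N%:R by rewrite mulr_ge0.
    by rewrite -/(bucket N t) td ler_pdivrMr // ltr_pdivlMr.
  move=> /andP[dt tdS].
  have t0 : 0 <= t by apply: le_trans dt; rewrite divr_ge0.
  have t1 : t <= 1.
    apply/ltW/(lt_le_trans tdS); rewrite ler_pdivrMr // mul1r ler_nat //.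
  split; last by rewrite t0 t1.
  apply/eqP; rewrite /bucket truncn_eq ?mulr_ge0 //.
  by rewrite -ler_pdivrMr // -ltr_pdivlMr // dt tdS.
rewrite lebesgue_measure_itv /= lte_fin ltr_pM2r ?invr_gt0 // ltr_nat ltnSn.
by rewrite -EFinB -mulrBl -natrB // subSnn mul1r.
Qed.

Lemma unif01_bucket_ge N :
  (0 < N)%N -> unif01 [set t | (N <= bucket N t)%N] = 0%E.
Proof.
move=> N_gt0; have NR : 0 < N%:R :> R by rewrite ltr0n.
rewrite unif01E; last exact: (measurable_bucket N (leq N)).
apply/eqP; rewrite eq_le measure_ge0 andbT.
have <- : lebesgue_measure (`[1%R, 1%R]%classic : set RT) = 0%E.
  by rewrite lebesgue_measure_itv /= lte_fin ltxx.
apply: le_measure; rewrite ?inE //.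
- by apply: measurableI => //; exact: (measurable_bucket N (leq N)).
- move=> t [/= Nt]; rewrite !in_itv /= => /andP[t0 t1]; rewrite t1 andbT.
  move: Nt; rewrite /bucket truncn_ge_nat ?mulr_ge0 //.
  by rewrite -[X in X <= _ -> _]mul1r ler_pM2r.
Qed.

Lemma unif01_bucket_lt_pred N (Q : pred nat) k : (k <= N)%N ->
  unif01 [set t | (bucket N t < k)%N && Q (bucket N t)] =
  ((count Q (iota 0 k))%:R / N%:R)%:E.
Proof.
elim: k => [_|k IHk kN].
  rewrite mul0r (_ : [set t | _] = set0) ?measure0 //.
  by apply/seteqP; split => t //=.
have -> : [set t : RT | (bucket N t < k.+1)%N && Q (bucket N t)] =
    [set t : RT | (bucket N t < k)%N && Q (bucket N t)] `|`
    [set t | Q k /\ bucket N t = k].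
  apply/seteqP; split => t /=.
    case/andP; rewrite ltnS leq_eqVlt => /orP[/eqP tk|tk] Qt.
      by right; rewrite -tk.
    by left; rewrite tk.
  case=> [/andP[tk ->]|[Qk ->]]; last by rewrite ltnSn Qk.
  by rewrite andbT ltnS ltnW.
rewrite measureU; last 3 first.
- exact: (measurable_bucket N (fun d => (d < k)%N && Q d)).
- exact: (measurable_bucket N (fun d => Q k /\ d = k)).
- by apply/seteqP; split => t // [/= /andP[tk _] [_ tk']]; rewrite tk' ltnn in tk.
rewrite -addn1 iotaD count_cat /= addn0 natrD mulrDl EFinD -IHk ?(ltnW kN) //.
congr (_ + _)%E; case: (boolP (Q k)) => Qk /=.
  rewrite mul1r (_ : [set t | _] = [set t | bucket N t = k]).
    exact: unif01_bucket_eq.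
  by apply/seteqP; split => t //= [].
rewrite mul0r (_ : [set t | _] = set0) ?measure0 //.
by apply/seteqP; split => t // [].
Qed.

(* [bucket N t] reaches [N] only at [t = 1], a null event. *)
Lemma unif01_bucket_pred N (Q : pred nat) : (0 < N)%N ->
  unif01 [set t | Q (bucket N t)] = ((count Q (iota 0 N))%:R / N%:R)%:E.
Proof.
move=> N_gt0; rewrite -unif01_bucket_lt_pred //.
set A := [set t | Q (bucket N t)]; set C := [set t : RT | (bucket N t < N)%N].
have mA : measurable A by exact: (measurable_bucket N (fun d => Q d)).
have mC : measurable C by exact: (measurable_bucket N (fun d => (d < N)%N)).
have AC0 : unif01 (A `\` C) = 0%E.
  apply/eqP; rewrite eq_le measure_ge0 andbT -(unif01_bucket_ge N_gt0).
  apply: le_measure; rewrite ?inE.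
  - exact: measurableD.
  - exact: (measurable_bucket N (leq N)).
  - by move=> t [_ /negP]; rewrite /= -leqNgt.
have -> : unif01 A = (unif01 (A `\` C) + unif01 (A `&` C))%E by exact: measureDI.
rewrite AC0 add0e; congr (unif01 _).
by apply/seteqP; split => t /=; [case=> -> ->|case/andP].
Qed.

End UniformIndex.

Section Construction.
Variables (R : realType) (n : nat).
Local Notation Om := (Omega R n).
Local Notation RT := (measurableTypeR R).

(* Position [i] lies in block [trunc_log 2 i]; the list [s] of words is coded
   by every block [2^K + pickle s] with [pickle s < 2^K]. *)
Definition block_words (c : nat) : seq (seq (sym n)) :=
  odflt [::] (unpickle (c - 2 ^ trunc_log 2 c)%N).

Definition dense_seq (t : R) : Om := fun i =>
  let D := block_words (trunc_log 2 i) in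
  nth ord0 (nth [::] D (bucket (size D) t)) (i - 2 ^ trunc_log 2 i)%N.

Definition dense_seq_from k (t : RT) : Om := fun i => dense_seq t (i + k)%N.

Lemma measurable_dense_seq_from k : measurable_fun setT (dense_seq_from k).
Proof.
apply: measurable_fun_Omega => i a; set c := trunc_log 2 (i + k)%N.
exact: (measurable_bucket (size (block_words c))
  (fun d => nth ord0 (nth [::] (block_words c) d) (i + k - 2 ^ c)%N = a)).
Qed.

HB.instance Definition _ k :=
  isMeasurableFun.Build _ _ _ _ (dense_seq_from k) (measurable_dense_seq_from k).

Definition mu0 : probability Om R := distribution (unif01 R) (dense_seq_from 0).

Lemma iter_Tpush_mu0 k :
  iter k (@Tpush R n) mu0 = distribution (unif01 R) (dense_seq_from k).
Proof.
elim: k => [|k IHk] //=; apply/funext => A; rewrite IHk.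
congr (unif01 R _); apply/seteqP; split => t /=;
  have -> // : Defs.shift (dense_seq_from k t) = dense_seq_from k.+1 t;
  by apply/funext => i; rewrite /Defs.shift /dense_seq_from addSnnS.
Qed.

Lemma trunc_log2_block c i : (i < 2 ^ c)%N -> trunc_log 2 (i + 2 ^ c)%N = c.
Proof.
by move=> ic; apply: trunc_log_eq; rewrite // leq_addl expnS mul2n -addnn ltn_add2r.
Qed.

Lemma wordof_dense_seq_from L (D : seq (L.-tuple (sym n))) c t :
  block_words c = map val D -> (L <= 2 ^ c)%N ->
  wordof L (dense_seq_from (2 ^ c)%N t) =
  nth (nseq_tuple L ord0) D (bucket (size D) t).
Proof.
move=> Dc Lc; apply: eq_from_tnth => i.
rewrite tnth_mktuple /dense_seq_from /dense_seq.
rewrite trunc_log2_block ?(leq_trans (ltn_ord i)) // Dc size_map addnK.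
have [tD|Dt] := ltnP (bucket (size D) t) (size D).
  by rewrite (nth_map (nseq_tuple L ord0)) // (tnth_nth ord0).
by rewrite !nth_default ?size_map // tnth_nseq.
Qed.

Lemma exists_block_words L (D : seq (L.-tuple (sym n))) :
  exists2 c, block_words c = map val D & (L <= 2 ^ c)%N.
Proof.
set a := pickle (map val D); set K := maxn L a.
have aK : (a < 2 ^ K)%N.
  apply: leq_trans (ltn_expl a (isT : (1 < 2)%N)) _.
  by rewrite leq_pexp2l // leq_maxr.
exists (a + 2 ^ K)%N.
  by rewrite /block_words trunc_log2_block // addnK pickleK.
rewrite (leq_trans (leq_maxl L a)) //.
rewrite (leq_trans (ltnW (ltn_expl K (isT : (1 < 2)%N)))) //.
by rewrite (leq_trans (leq_addl a _)) // ltnW // ltn_expl.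
Qed.

Lemma dense_seq_from_cyl L (D : seq (L.-tuple (sym n))) c (w : L.-tuple (sym n)) :
  block_words c = map val D -> (L <= 2 ^ c)%N -> (0 < size D)%N ->
  distribution (unif01 R) (dense_seq_from (2 ^ c)%N) (cyl w) =
  ((count_mem w D)%:R / (size D)%:R)%:E.
Proof.
move=> Dc Lc D_gt0.
rewrite -[X in count_mem _ X](mkseq_nth (nseq_tuple L ord0) D) /mkseq count_map.
rewrite -unif01_bucket_pred //; congr (unif01 R _); apply/seteqP; split => t /=.
  by move/cyl_wordofP; rewrite (wordof_dense_seq_from _ Dc Lc) => ->.
by move/eqP => tw; apply/cyl_wordofP; rewrite (wordof_dense_seq_from _ Dc Lc).
Qed.

End Construction.

Theorem corollary2p9 (R : realType) (n : nat) :
  exists mu : probability (Omega R n) R,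
    forall (nu : probability (Omega R n) R) (eps : R), 0 < eps ->
      exists k : nat, dMK (iter k (@Tpush R n) mu) nu < eps.
Proof.
exists (mu0 R n) => nu eps eps_gt0.
have eps4_gt0 : 0 < eps / 4 by rewrite divr_gt0.
have [L epsL] := exists_halfpow_lt eps4_gt0.
have [D D_gt0 nuD] :=
  @empirical_approx _ _ (fun w : L.-tuple (sym n) => fine (nu (cyl w)))
  (fun w => fine_ge0 (measure_ge0 nu _)) (sum_prob_cyl nu L) _ eps4_gt0.
have [c Dc Lc] := exists_block_words D.
exists (2 ^ c)%N; rewrite iter_Tpush_mu0.
apply: le_lt_trans (dMK_le_cyl _ _ L) _.
under eq_bigr do
  rewrite [X in fine X - _](dense_seq_from_cyl R _ Dc Lc D_gt0) distrC.
have : 0 <= 2^-1 ^+ L :> R by rewrite exprn_ge0 // invr_ge0.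
lra.
Qed.
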